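(* For all $n,k\in\mathbb Z$, $[x^ky^{n-k}](x+y)^n=\binom nk_{a,b;q,p}$. In particular, \[ (x+y)^n=\sum_{k\ge0}\binom nk_{a,b;q,p}x^ky^{n-k}\ \text{ in } \mathbb C_{a,b;q,p}[[x,y,y^{-1}]],\qquad (x+y)^n=\sum_{k\le n}\binom nk_{a,b;q,p}x^ky^{n-k}\ \text{ in } \mathbb C_{a,b;q,p}[[x,x^{-1},y]]. \]
   Context: Let $q,p\in\mathbb C$ with $|p|<1$. $\theta(x;p)=\prod_{j\ge0}(1-p^jx)(1-p^{j+1}/x)$, $\theta(x_1,\dots,x_\ell;p)=\prod_i\theta(x_i;p)$. Let $\mathbb E_{a,b;q,p}$ be the field of totally elliptic functions in $\log_qa,\log_qb$ (meromorphic, doubly periodic with equal periods $\sigma^{-1},\tau\sigma^{-1}$ where $q=e^{2\pi i\sigma},p=e^{2\pi i\tau}$). $\mathbb C_{a,b;q,p}[x,x^{-1},y,y^{-1}]$ is the associative unital $\mathbb C$-algebra generated by invertible $x,y$ and $\mathbb E_{a,b;q,p}$ (with $a,b$ commuting) subject to $x^{-1}x=xx^{-1}=1$, $y^{-1}y=yy^{-1}=1$, $yx=w_{a,b;q,p}(1,1)xy$, $xf(a,b)=f(aq,bq^2)x$, $yf(a,b)=f(aq^2,bq)y$ for all $f\in\mathbb E_{a,b;q,p}$; $\mathbb C_{a,b;q,p}[[x,y,y^{-1}]]$ and $\mathbb C_{a,b;q,p}[[x,x^{-1},y]]$ are the formal power series extensions (no negative powers of $x$, resp. of $y$), with $(x+y)^n$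 for $n<0$ expanded as $((1+xy^{-1})y)^n$, resp. $(x(1+x^{-1}y))^n$. Here $w_{a,b;q,p}(s,t)=\frac{\theta(aq^{s+2t},bq^{2s+t-2},aq^{t-s-1}/b;p)}{\theta(aq^{s+2t-2},bq^{2s+t},aq^{t-s+1}/b;p)}q$, $W_{a,b;q,p}(s,t)=\prod_{j=1}^tw_{a,b;q,p}(s,j)$ with product convention $\prod_{j=l}^mA_j=A_l\cdots A_m$ ($m>l-1$), $1$ ($m=l-1$), $A_{l-1}^{-1}\cdots A_{m+1}^{-1}$ ($m<l-1$). The elliptic binomial coefficients $\binom nk_{a,b;q,p}$ are the unique family with $\binom n0=\binom nn=1$ and $\binom{n+1}k=\binom nk+\binom n{k-1}W_{a,b;q,p}(k,n+1-k)$ for $(n+1,k)\ne(0,0)$ (closed form $\frac{(q^{1+k},aq^{1+k},bq^{1+k},aq^{1-k}/b;q,p)_{n-k}}{(q,aq,bq^{1+2k},aq/b;q,p)_{n-k}}$, $(x;q,p)_r=\prod_{i=0}^{r-1}\theta(xq^i;p)$). Coefficient extraction: $[x^ky^{n-k}](x+y)^n$ is the coefficient of $x^ky^{n-k}$ (coefficient written on the left) in the first expansion if $k\ge0$ and in the second expansion if $k<0$. *)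

From HB Require Import structures.
From mathcomp Require Import all_boot all_order all_algebra.
From mathcomp Require Import complex.
From mathcomp Require Import all_classical all_reals all_analysis.
From mathcomp Require Import Rstruct Rstruct_topology.
Import ComplexField.
Import Order.TTheory GRing.Theory Num.Theory.
Import numFieldTopology.Exports numFieldNormedType.Exports.

Set Implicit Arguments.
Unset Strict Implicit.
Unset Printing Implicit Defensive.

Local Open Scope classical_set_scope.
Local Open Scope ring_scope.

Notation CC := (Rdefinitions.R)[i].

(* theta(x;p) = prod_{j>=0} (1 - p^j x)(1 - p^{j+1}/x), as the limit of the
   partial products (convergent for |p| < 1, x <> 0). *)
Definition theta (p x : CC) : CC :=
  lim ((fun N : nat =>
          (\prod_(j < N) ((1 - p ^+ j * x) * (1 - p ^+ j.+1 / x)) : CC^o))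
         @ \oo).

Definition wfun (q p : CC) (s t : int) (a b : CC) : CC :=
  theta p (a * q ^ (s + 2 * t)) * theta p (b * q ^ (2 * s + t - 2))
    * theta p (a * q ^ (t - s - 1) / b)
  / (theta p (a * q ^ (s + 2 * t - 2)) * theta p (b * q ^ (2 * s + t))
       * theta p (a * q ^ (t - s + 1) / b))
  * q.

(* Product convention over integer ranges:
   prod_{j=l}^m A_j = A_l ... A_m        if m >= l-1 (empty product = 1 if m = l-1)
                    = A_{l-1}^-1 ... A_{m+1}^-1   if m < l-1. *)
Definition prodZ (A : int -> CC) (l m : int) : CC :=
  if (l - 1 <= m)%R then \prod_(0 <= i < `|(m - l + 1)%R|%N) A (l + i%:Z)
  else \prod_(0 <= i < `|(l - 1 - m)%R|%N) (A (m + 1 + i%:Z))^-1.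

Definition Wfun (q p : CC) (s t : int) (a b : CC) : CC :=
  prodZ (fun j => wfun q p s j a b) 1 t.

(* This set is
   stable under the shifts a -> a q^i, b -> b q^j, and on it every w(s,t) is a
   finite nonzero number.  Identities in the field E_{a,b;q,p} of the
   relevant functions are checked pointwise on this (dense) set. *)
Definition generic (q p a b : CC) : Prop :=
  a != 0 /\ b != 0 /\
  forall m : int, theta p (a * q ^ m) != 0 /\ theta p (b * q ^ m) != 0
                  /\ theta p (a * q ^ m / b) != 0.

Definition is_ell_binom (q p : CC) (B : int -> int -> CC -> CC -> CC) : Prop :=
  forall a b, generic q p a b ->
    (forall n : int, B n 0 a b = 1) /\
    (forall n : int, B n n a b = 1) /\
    (forall n k : int, (n + 1, k) != (0, 0) ->
       B (n + 1) k a b = B n k a b + B n (k - 1) a b * Wfun q p k (n + 1 - k) a b).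

(* Coefficient functions (functions of (a,b)), and the shift automorphisms
   x f(a,b) = f(aq, bq^2) x,  y f(a,b) = f(aq^2, bq) y, iterated i resp. j
   times (i, j in Z). *)
Definition coef := CC -> CC -> CC.
Definition shx (q : CC) (i : int) (f : coef) : coef :=
  fun a b => f (a * q ^ i) (b * q ^ (2 * i)).
Definition shy (q : CC) (j : int) (f : coef) : coef :=
  fun a b => f (a * q ^ (2 * j)) (b * q ^ j).

(* w_{a,b;q,p}(1,1), so that y x = w11 x y. *)
Definition w11 (q p : CC) : coef := wfun q p 1 1.

(* Normal ordering y^j x = cyx j . x y^j (j in Z), derived from the relations
   y x = w11 x y and y f = (shy 1 f) y:
     cyx 0 = 1,  cyx (j+1) = shy 1 (cyx j) * w11,
     cyx (j-1) = shy (-1) (cyx j) / shy (-1) w11. *)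
Fixpoint cyx_pos (q p : CC) (m : nat) : coef :=
  match m with
  | 0 => fun _ _ => 1
  | m'.+1 => fun a b => shy q 1 (cyx_pos q p m') a b * w11 q p a b
  end.
Fixpoint cyx_neg (q p : CC) (m : nat) : coef :=
  match m with
  | 0 => fun _ _ => 1
  | m'.+1 => fun a b => shy q (-1) (cyx_neg q p m') a b / shy q (-1) (w11 q p) a b
  end.
Definition cyx (q p : CC) (j : int) : coef :=
  match j with
  | Posz m => cyx_pos q p m
  | Negz m => cyx_neg q p m.+1
  end.

(* Formal sums  sum_{i,j in Z} z i j x^i y^j  (coefficients on the left,
   coefficients are functions of (a,b)). *)
Definition series := int -> int -> coef.

Definition one_s : series := fun i j _ _ => if (i == 0) && (j == 0) then 1 else 0.

(* right multiplication by x:  (f x^i y^j) x = (shx i (cyx j) f) x^(i+1) y^j *)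
Definition rmulx (q p : CC) (z : series) : series :=
  fun i j a b => z (i - 1) j a b * shx q (i - 1) (cyx q p j) a b.
Definition rmuly (z : series) : series := fun i j a b => z i (j - 1) a b.
Definition rmulxy (q p : CC) (z : series) : series :=
  fun i j a b => rmulx q p z i j a b + rmuly z i j a b.

Definition eqG (q p : CC) (z1 z2 : series) : Prop :=
  forall i j a b, generic q p a b -> z1 i j a b = z2 i j a b.

(* C_{a,b;q,p}[[x,y,y^-1]]: no negative powers of x *)
Definition inS1 (q p : CC) (z : series) : Prop :=
  forall i j a b, generic q p a b -> i < 0 -> z i j a b = 0.
(* C_{a,b;q,p}[[x,x^-1,y]]: no negative powers of y *)
Definition inS2 (q p : CC) (z : series) : Prop :=
  forall i j a b, generic q p a b -> j < 0 -> z i j a b = 0.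

(* z is (x+y)^n:  for n >= 0, z = 1.(x+y)^n ; for n < 0, z.(x+y)^(-n) = 1,
   i.e. z is the inverse of (x+y)^(-n) (unique in S1 and in S2). *)
Definition is_pow_xy (q p : CC) (n : int) (z : series) : Prop :=
  if 0 <= n then eqG q p z (iter `|n|%N (rmulxy q p) one_s)
  else eqG q p (iter `|n|%N (rmulxy q p) z) one_s.

Definition inS_for (q p : CC) (k : int) (z : series) : Prop :=
  if 0 <= k then inS1 q p z else inS2 q p z.

From Pilot Require Import Defs.
From HB Require Import structures.
From mathcomp Require Import all_boot all_order all_algebra.
From mathcomp Require Import complex.
From mathcomp Require Import all_classical all_reals all_analysis.
From mathcomp Require Import Rstruct Rstruct_topology.
From mathcomp Require Import ring zify.
Import ComplexField.
Import Order.TTheory GRing.Theory Num.Theory.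
Import numFieldTopology.Exports numFieldNormedType.Exports.
Local Open Scope ring_scope.

(* Right multiplication by x + y acts on coefficients as
     c(i, j) |-> c(i - 1, j) W(i, j) + c(i, j - 1),
   because y^j x = c_j x y^j for a coefficient c_j, and moving c_j to the
   left past x^(i-1) turns it into W(i, j).  Hence the recurrence of the
   elliptic binomials says that multiplying the series
   sum_k binom(n, k) x^k y^(n-k), truncated to k >= 0 or to k <= n, by x + y
   gives the series of index n + 1.  At n = 0 both truncations are 1, since
   binom(0, k) vanishes for k <> 0, so they are (x + y)^n for every n in Z.
   They are the only such series in their rings because right multiplication
   by x + y is injective there: the coefficients can be solved for starting
   from the lowest power of x, resp. of y, using W <> 0. *)

Lemma mulr_expfzDr (R : fieldType) (q a : R) (m n : int) :
  q != 0 -> a * q ^ m * q ^ n = a * q ^ (m + n).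
Proof. by move=> hq; rewrite -mulrA -expfzDr. Qed.

Lemma divr_expfzB (R : fieldType) (q a b : R) (m n : int) :
  q != 0 -> a * q ^ m / (b * q ^ n) = a * q ^ (m - n) / b.
Proof. by move=> hq; rewrite expfzDr // -invr_expz invfM; ring. Qed.

Section Weights.

Context {q p : CC}.
Hypothesis q_neq0 : q != 0.

Lemma w11_shift (s t : int) (a b : CC) :
  w11 q p (a * q ^ (s + 2 * t - 3)) (b * q ^ (2 * s + t - 3)) = wfun q p s t a b.
Proof.
rewrite /w11 /wfun !mulr_expfzDr // !divr_expfzB //.
by congr (theta p (a * q ^ _) * theta p (b * q ^ _) * theta p (a * q ^ _ / b)
  / (theta p (a * q ^ _) * theta p (b * q ^ _) * theta p (a * q ^ _ / b)) * q); ring.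
Qed.

Lemma cyx_posE (m : nat) (a b : CC) :
  cyx_pos q p m a b = \prod_(0 <= l < m) w11 q p (a * q ^ (2 * l%:Z)) (b * q ^ l%:Z).
Proof.
elim: m a b => [|m IH] a b /=; first by rewrite big_geq.
rewrite /shy IH big_nat_recl // mulr0 expr0z !mulr1 mulrC; congr (_ * _).
apply: eq_bigr => l _; rewrite !mulr_expfzDr //.
by congr (w11 q p (a * q ^ _) (b * q ^ _)); lia.
Qed.

Lemma cyx_negE (m : nat) (a b : CC) :
  cyx_neg q p m a b =
    \prod_(0 <= l < m) (w11 q p (a * q ^ (- 2 * l.+1%:Z)) (b * q ^ (- l.+1%:Z)))^-1.
Proof.
elim: m a b => [|m IH] a b /=; first by rewrite big_geq.
rewrite /shy IH big_nat_recl // mulrC; congr (_ * _).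
by apply: eq_bigr => l _; rewrite !mulr_expfzDr // (intS l.+1) mulrDr.
Qed.

Lemma shx_cyxE (i j : int) (a b : CC) :
  shx q (i - 1) (cyx q p j) a b = Wfun q p i j a b.
Proof.
rewrite /shx /Wfun /prodZ /cyx subrr.
case: j => [m|m].
  rewrite subrK cyx_posE; apply: eq_bigr => l _.
  rewrite !mulr_expfzDr // -w11_shift.
  by congr (w11 q p (a * q ^ _) (b * q ^ _)); lia.
rewrite cyx_negE big_nat_rev /=; apply: eq_big_nat => l /andP[_ hl].
rewrite add0n subSS; congr (_^-1); rewrite !mulr_expfzDr // -w11_shift.
by congr (w11 q p (a * q ^ _) (b * q ^ _)); rewrite NegzE; lia.
Qed.

Lemma wfun_neq0 (s t : int) {a b : CC} : generic q p a b -> wfun q p s t a b != 0.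
Proof.
move=> [_ [_ hth]].
have ha m := (hth m).1; have hb m := (hth m).2.1; have hab m := (hth m).2.2.
by rewrite /wfun !mulf_neq0 ?invr_neq0 ?mulf_neq0.
Qed.

Lemma Wfun_neq0 (s t : int) {a b : CC} : generic q p a b -> Wfun q p s t a b != 0.
Proof.
move=> g; have hw j : wfun q p s j a b != 0 := wfun_neq0 s j g.
rewrite /Wfun /prodZ; case: ifP => _;
  apply: (big_ind (fun x : CC => x != 0)) => [|x y|l _]; rewrite ?oner_neq0 ?invr_neq0 //;
  exact: mulf_neq0.
Qed.

End Weights.

Lemma Wfun0 (q p : CC) (k : int) (a b : CC) : Wfun q p k 0 a b = 1.
Proof. by rewrite /Wfun /prodZ subrr lexx subrK big_geq. Qed.

Section RightMultiplication.

Context {q p : CC}.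

Lemma eqG_sym {u v} : eqG q p u v -> eqG q p v u.
Proof. by move=> h i j a b g; rewrite h. Qed.

Lemma eqG_trans {u v w} : eqG q p u v -> eqG q p v w -> eqG q p u w.
Proof. by move=> huv hvw i j a b g; rewrite huv ?hvw. Qed.

Lemma eqG_rmulxy {u v} : eqG q p u v -> eqG q p (rmulxy q p u) (rmulxy q p v).
Proof. by move=> h i j a b g; rewrite /rmulxy /rmulx /rmuly !h. Qed.

Lemma eqG_iter m {u v} : eqG q p u v ->
  eqG q p (iter m (rmulxy q p) u) (iter m (rmulxy q p) v).
Proof. by move=> h; elim: m => //= m IH; apply: eqG_rmulxy. Qed.

Lemma iter_rmulxy_succ {Z : int -> Defs.series} :
  (forall n, eqG q p (rmulxy q p (Z n)) (Z (n + 1))) ->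
  forall (m : nat) n, eqG q p (iter m (rmulxy q p) (Z n)) (Z (n + m%:Z)).
Proof.
move=> hZ; elim=> [|m IH] n /=; first by rewrite addr0 => i j a b.
apply: eqG_trans (eqG_rmulxy (IH n)) _.
have -> : n + m.+1%:Z = n + m%:Z + 1 by lia.
exact: hZ.
Qed.

Lemma is_pow_xy_of_succ {Z : int -> Defs.series} :
  (forall n, eqG q p (rmulxy q p (Z n)) (Z (n + 1))) -> eqG q p (Z 0) one_s ->
  forall n, is_pow_xy q p n (Z n).
Proof.
move=> hZ hZ0 [m|m]; rewrite /is_pow_xy /=.
- have := iter_rmulxy_succ hZ m 0; rewrite add0r => hm.
  exact: eqG_trans (eqG_sym hm) (eqG_iter m hZ0).
- have := iter_rmulxy_succ hZ m.+1 (Negz m).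
  rewrite (_ : Negz m + m.+1%:Z = 0); last by rewrite NegzE; lia.
  by move/eqG_trans; apply.
Qed.

Lemma iter_rmulxy_inj {S : Defs.series -> Prop} :
  (forall u, S u -> S (rmulxy q p u)) ->
  (forall u v, S u -> S v -> eqG q p (rmulxy q p u) (rmulxy q p v) -> eqG q p u v) ->
  forall m u v, S u -> S v ->
    eqG q p (iter m (rmulxy q p) u) (iter m (rmulxy q p) v) -> eqG q p u v.
Proof.
move=> hS hinj; have hSm m w : S w -> S (iter m (rmulxy q p) w).
  by elim: m => //= m IH /IH; apply: hS.
elim=> [|m IH] u v hu hv //= huv.
exact: IH hu hv (hinj _ _ (hSm m u hu) (hSm m v hv) huv).
Qed.

Lemma is_pow_xy_uniq {S : Defs.series -> Prop} :
  (forall u, S u -> S (rmulxy q p u)) ->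
  (forall u v, S u -> S v -> eqG q p (rmulxy q p u) (rmulxy q p v) -> eqG q p u v) ->
  forall n u v, S u -> S v -> is_pow_xy q p n u -> is_pow_xy q p n v -> eqG q p u v.
Proof.
move=> hS hinj n u v hu hv; rewrite /is_pow_xy; case: ifP => _ hun hvn.
  exact: eqG_trans hun (eqG_sym hvn).
exact: iter_rmulxy_inj hS hinj _ _ _ hu hv (eqG_trans hun (eqG_sym hvn)).
Qed.

Hypothesis q_neq0 : q != 0.

Lemma rmulxyE u i j a b :
  rmulxy q p u i j a b = u (i - 1) j a b * Wfun q p i j a b + u i (j - 1) a b.
Proof. by rewrite /rmulxy /rmulx /rmuly shx_cyxE. Qed.

Lemma inS1_rmulxy u : inS1 q p u -> inS1 q p (rmulxy q p u).
Proof.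
move=> hu i j a b g i_lt0.
by rewrite rmulxyE !hu ?mul0r ?addr0 //; lia.
Qed.

Lemma inS2_rmulxy u : inS2 q p u -> inS2 q p (rmulxy q p u).
Proof.
move=> hu i j a b g j_lt0.
by rewrite rmulxyE !hu ?mul0r ?addr0 //; lia.
Qed.

Lemma rmulxy_inj_S1 u v : inS1 q p u -> inS1 q p v ->
  eqG q p (rmulxy q p u) (rmulxy q p v) -> eqG q p u v.
Proof.
move=> hu hv huv i j a b g.
have step i' j' : u (i' - 1) (j' + 1) a b = v (i' - 1) (j' + 1) a b ->
    u i' j' a b = v i' j' a b.
  move=> e; have := huv i' (j' + 1) a b g.
  by rewrite !rmulxyE addrK e; apply: addrI.
case: (ltrP i 0) => [i_lt0|]; first by rewrite hu ?hv.
case: i => // i _; elim: i j => [|i IH] j; apply: step.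
  by rewrite hu ?hv.
by rewrite (_ : i.+1%:Z - 1 = i) ?IH //; lia.
Qed.

Lemma rmulxy_inj_S2 u v : inS2 q p u -> inS2 q p v ->
  eqG q p (rmulxy q p u) (rmulxy q p v) -> eqG q p u v.
Proof.
move=> hu hv huv i j a b g.
have step i' j' : u (i' + 1) (j' - 1) a b = v (i' + 1) (j' - 1) a b ->
    u i' j' a b = v i' j' a b.
  move=> e; have := huv (i' + 1) j' a b g.
  rewrite !rmulxyE addrK e => /addIr.
  exact/mulIf/Wfun_neq0.
case: (ltrP j 0) => [j_lt0|]; first by rewrite hu ?hv.
case: j => // j _; elim: j i => [|j IH] i; apply: step.
  by rewrite hu ?hv.
by rewrite (_ : j.+1%:Z - 1 = j) ?IH //; lia.
Qed.

Definition diag_series (n : int) (c : int -> coef) : Defs.series :=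
  fun i j a b => if j == n - i then c i a b else 0.

Lemma rmulxy_diag n c i j a b :
  rmulxy q p (diag_series n c) i j a b =
    if j == n + 1 - i then c (i - 1) a b * Wfun q p i j a b + c i a b else 0.
Proof.
rewrite rmulxyE /diag_series.
have -> : (j == n - (i - 1)) = (j == n + 1 - i) by apply/eqP/eqP; lia.
have -> : (j - 1 == n - i) = (j == n + 1 - i) by apply/eqP/eqP; lia.
by case: eqP; rewrite ?mul0r ?addr0.
Qed.

End RightMultiplication.

Definition binom_series1 (B : int -> int -> coef) (n : int) : Defs.series :=
  diag_series n (fun i a b => if 0 <= i then B n i a b else 0).

Definition binom_series2 (B : int -> int -> coef) (n : int) : Defs.series :=
  diag_series n (fun i a b => if i <= n then B n i a b else 0).

Section EllipticBinomials.

Context {q p : CC} {B : int -> int -> CC -> CC -> CC}.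
Hypotheses (q_neq0 : q != 0) (B_binom : is_ell_binom q p B).

Section GenericPoint.

Context {a b : CC}.
Hypothesis ab_generic : generic q p a b.

Let binom_n0 (n : int) : B n 0 a b = 1 := (B_binom a b ab_generic).1 n.
Let binom_nn (n : int) : B n n a b = 1 := (B_binom a b ab_generic).2.1 n.
Let binom_rec (n k : int) : (n + 1, k) != (0, 0) ->
    B (n + 1) k a b = B n k a b + B n (k - 1) a b * Wfun q p k (n + 1 - k) a b :=
  (B_binom a b ab_generic).2.2 n k.

Lemma binom_eq0_rec (n k : int) : (n + 1, k) != (0, 0) ->
  B (n + 1) k a b = 0 -> B n (k - 1) a b = 0 -> B n k a b = 0.
Proof. by move=> nk; rewrite binom_rec // => + hk; rewrite hk mul0r addr0. Qed.

Lemma binom_pred_eq0 (n k : int) : (n + 1, k) != (0, 0) ->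
  B (n + 1) k a b = B n k a b -> B n (k - 1) a b = 0.
Proof.
move=> nk; rewrite binom_rec // -{2}[B n k a b]addr0 => /addrI /eqP.
by rewrite mulf_eq0 (negbTE (Wfun_neq0 q_neq0 _ _ ab_generic)) orbF => /eqP.
Qed.

Lemma binom_gt_eq0 (n k : int) : n < k -> (0 <= n) || (k < 0) -> B n k a b = 0.
Proof.
move=> nk; have [d ->] : exists d : nat, k = n + 1 + d%:Z by exists (absz (k - n - 1)%R); lia.
elim: d n {nk} => [|d IH] n hn.
  have nz : (n + 1, n + 1) != (0, 0) by rewrite xpair_eqE; lia.
  move: (binom_rec n (n + 1) nz); rewrite addrK subrr Wfun0 !binom_nn mulr1 addr0.
  by rewrite -{1}(add0r 1) => /addIr <-.
apply: binom_eq0_rec; first by rewrite xpair_eqE; lia.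
  by rewrite (_ : n + 1 + d.+1%:Z = n + 1 + 1 + d%:Z) ?IH //; lia.
by rewrite (_ : n + 1 + d.+1%:Z - 1 = n + 1 + d%:Z) ?IH //; lia.
Qed.

Lemma binom_lt0_eq0 (n k : int) : 0 <= n -> k < 0 -> B n k a b = 0.
Proof.
move=> n_ge0 k_lt0; have [d ->] : exists d : nat, k = - d%:Z - 1 by exists (absz (k + 1)%R); lia.
elim: d n n_ge0 {k_lt0} => [|d IH] n n_ge0;
  (apply: binom_pred_eq0; first by rewrite xpair_eqE; lia).
  by rewrite !binom_n0.
by rewrite (_ : - d.+1%:Z = - d%:Z - 1) ?IH //; lia.
Qed.

End GenericPoint.

Lemma binom_series1E n i j a b :
  binom_series1 B n i j a b = if (0 <= i) && (j == n - i) then B n i a b else 0.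
Proof. by rewrite /binom_series1 /diag_series andbC; case: (j == _). Qed.

Lemma binom_series2E n i j a b :
  binom_series2 B n i j a b = if (i <= n) && (j == n - i) then B n i a b else 0.
Proof. by rewrite /binom_series2 /diag_series andbC; case: (j == _). Qed.

Lemma inS1_binom_series1 n : inS1 q p (binom_series1 B n).
Proof. by move=> i j a b _ i_lt0; rewrite binom_series1E ifF //; lia. Qed.

Lemma inS2_binom_series2 n : inS2 q p (binom_series2 B n).
Proof.
move=> i j a b _ j_lt0; rewrite binom_series2E.
by case: eqP => [ji|]; rewrite ?andbF // andbT ifF //; lia.
Qed.

Lemma rmulxy_binom_series1 n :
  eqG q p (rmulxy q p (binom_series1 B n)) (binom_series1 B (n + 1)).
Proof.
move=> i j a b g; have [B_n0 [_ B_rec]] := B_binom a b g.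
rewrite rmulxy_diag // /binom_series1 /diag_series; case: eqP => // ->.
case: (ltrgtP i 0) => [i_lt0|i_gt0|->].
- by rewrite !ifF ?mul0r ?addr0 //; lia.
- have nz : (n + 1, i) != (0, 0) by rewrite xpair_eqE; lia.
  by rewrite !ifT ?B_rec // 1?addrC //; lia.
- by rewrite [0 <= _]/= mul0r add0r !B_n0.
Qed.

Lemma rmulxy_binom_series2 n :
  eqG q p (rmulxy q p (binom_series2 B n)) (binom_series2 B (n + 1)).
Proof.
move=> i j a b g; have [_ [B_nn B_rec]] := B_binom a b g.
rewrite rmulxy_diag // /binom_series2 /diag_series; case: eqP => // ->.
case: (ltrgtP i (n + 1)) => [i_lt|i_gt|->].
- have nz : (n + 1, i) != (0, 0) by rewrite xpair_eqE; lia.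
  by rewrite !ifT ?B_rec // 1?addrC //; lia.
- by rewrite !ifF ?mul0r ?addr0 //; lia.
- by rewrite addrK subrr lexx Wfun0 !B_nn mulr1 ifF ?addr0 //; lia.
Qed.

Lemma binom_series1_0 : eqG q p (binom_series1 B 0) one_s.
Proof.
move=> i j a b g; rewrite binom_series1E /one_s sub0r.
have [->|i_neq0] := eqVneq i 0; first by rewrite oppr0 lexx (B_binom a b g).1.
case: (boolP (0 <= i)) => //= i_ge0; case: (j == - i) => //.
by apply: (binom_gt_eq0 g); lia.
Qed.

Lemma binom_series2_0 : eqG q p (binom_series2 B 0) one_s.
Proof.
move=> i j a b g; rewrite binom_series2E /one_s sub0r.
have [->|i_neq0] := eqVneq i 0; first by rewrite oppr0 lexx (B_binom a b g).1.
case: (boolP (i <= 0)) => //= i_le0; case: (j == - i) => //.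
by apply: (binom_lt0_eq0 g); lia.
Qed.

Lemma is_pow_xy_binom_series1 n : is_pow_xy q p n (binom_series1 B n).
Proof. exact: (@is_pow_xy_of_succ _ _ (binom_series1 B) rmulxy_binom_series1 binom_series1_0). Qed.

Lemma is_pow_xy_binom_series2 n : is_pow_xy q p n (binom_series2 B n).
Proof. exact: (@is_pow_xy_of_succ _ _ (binom_series2 B) rmulxy_binom_series2 binom_series2_0). Qed.

Lemma is_pow_xy_S1_uniq n z : inS1 q p z -> is_pow_xy q p n z ->
  eqG q p z (binom_series1 B n).
Proof.
move=> z_S1 z_pow.
exact: (is_pow_xy_uniq (inS1_rmulxy q_neq0) (rmulxy_inj_S1 q_neq0) n z _ z_S1
  (inS1_binom_series1 n) z_pow (is_pow_xy_binom_series1 n)).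
Qed.

Lemma is_pow_xy_S2_uniq n z : inS2 q p z -> is_pow_xy q p n z ->
  eqG q p z (binom_series2 B n).
Proof.
move=> z_S2 z_pow.
exact: (is_pow_xy_uniq (inS2_rmulxy q_neq0) (rmulxy_inj_S2 q_neq0) n z _ z_S2
  (inS2_binom_series2 n) z_pow (is_pow_xy_binom_series2 n)).
Qed.

End EllipticBinomials.

Theorem theorem8 (q p : CC) (B : int -> int -> CC -> CC -> CC) :
  q != 0 -> p != 0 -> `|p| < 1 -> is_ell_binom q p B ->
  (* [x^k y^(n-k)] (x+y)^n = binom(n,k) for all n, k in Z *)
  (forall n k : int,
     (exists z, inS_for q p k z /\ is_pow_xy q p n z) /\
     (forall z, inS_for q p k z -> is_pow_xy q p n z ->
        forall a b, generic q p a b -> z k (n - k) a b = B n k a b))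
  (* (x+y)^n = sum_{k >= 0} binom(n,k) x^k y^(n-k) in C[[x,y,y^-1]] *)
  /\ (forall n : int,
     (exists z, inS1 q p z /\ is_pow_xy q p n z) /\
     (forall z, inS1 q p z -> is_pow_xy q p n z ->
        forall i j a b, generic q p a b ->
          z i j a b = (if (0 <= i) && (j == n - i) then B n i a b else 0)))
  (* (x+y)^n = sum_{k <= n} binom(n,k) x^k y^(n-k) in C[[x,x^-1,y]] *)
  /\ (forall n : int,
     (exists z, inS2 q p z /\ is_pow_xy q p n z) /\
     (forall z, inS2 q p z -> is_pow_xy q p n z ->
        forall i j a b, generic q p a b ->
          z i j a b = (if (i <= n) && (j == n - i) then B n i a b else 0))).
Proof.
move=> q_neq0 _ _ B_binom.
have pow1 := is_pow_xy_binom_series1 q_neq0 B_binom.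
have pow2 := is_pow_xy_binom_series2 q_neq0 B_binom.
have uniq1 := is_pow_xy_S1_uniq q_neq0 B_binom.
have uniq2 := is_pow_xy_S2_uniq q_neq0 B_binom.
split; [|split].
- move=> n k; rewrite /inS_for; case: (boolP (0 <= k)) => k_ge0 /=; split.
  + by exists (binom_series1 B n); split; [exact: inS1_binom_series1 | exact: pow1].
  + by move=> z z_S1 z_pow a b g; rewrite (uniq1 n z) // binom_series1E k_ge0 eqxx.
  + by exists (binom_series2 B n); split; [exact: inS2_binom_series2 | exact: pow2].
  + move=> z z_S2 z_pow a b g; rewrite (uniq2 n z) // binom_series2E eqxx andbT.
    by case: ifP => // k_gt; rewrite (binom_gt_eq0 q_neq0 B_binom g) //; lia.
- move=> n; split.
    by exists (binom_series1 B n); split; [exact: inS1_binom_series1 | exact: pow1].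
  by move=> z z_S1 z_pow i j a b g; rewrite (uniq1 n z) // binom_series1E.
- move=> n; split.
    by exists (binom_series2 B n); split; [exact: inS2_binom_series2 | exact: pow2].
  by move=> z z_S2 z_pow i j a b g; rewrite (uniq2 n z) // binom_series2E.
Qed.
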